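(* For any integers $k\ge 2$, $g\ge 3$ and any $\epsilon>0$, there exists a signed graph $(G,\sigma)$ of girth at least $g$ such that $\chi(G)=k$ and $\chi_c(G,\sigma)>2k-\epsilon$.
   Context: A signed graph $(G,\sigma)$ is a finite graph $G$ (multiple edges allowed, no loops) with a signature $\sigma:E(G)\to\{+1,-1\}$. $\chi(G)$ is the chromatic number of the underlying graph $G$. For real $r\ge 2$, $C^r$ is the circle of circumference $r$, $d_{C^r}(x,y)=\min\{|x-y|,r-|x-y|\}$, and $\overline{x}=x+r/2\pmod r$. A circular $r$-coloring of $(G,\sigma)$ is $f:V(G)\to C^r$ with $d_{C^r}(f(u),f(v))\ge1$ for each positive edge $uv$ and $d_{C^r}(f(u),\overline{f(v)})\ge1$ for each negative edge $uv$; $\chi_c(G,\sigma)$ is the infimum of $r\ge 2$ for which such a coloring exists. *)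

From HB Require Import structures.
From mathcomp Require Import all_boot all_order all_algebra.
From mathcomp Require Import boolp classical_sets reals.
Set Implicit Arguments. Unset Strict Implicit. Unset Printing Implicit Defensive.
Import Order.TTheory GRing.Theory Num.Theory.
Local Open Scope ring_scope.

(* A signature is a symmetric relation [sigma];
   the edge uv is negative iff [sigma u v] (its value on non-edges is
   irrelevant). *)
Definition simple_graph (T : finType) (e : rel T) :=
  symmetric e /\ irreflexive e.

Definition is_cycle (T : finType) (e : rel T) (s : seq T) :=
  (3 <= size s)%N && uniq s && cycle e s.

Definition girth_ge (T : finType) (e : rel T) (g : nat) :=
  forall s : seq T, is_cycle e s -> (g <= size s)%N.

Definition colorable (T : finType) (e : rel T) (n : nat) :=
  exists f : T -> 'I_n, forall x y, e x y -> f x != f y.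

Definition chromatic_number_eq (T : finType) (e : rel T) (k : nat) :=
  colorable e k /\ forall n, colorable e n -> (k <= n)%N.

(* the circle C^r is represented by [0, r) *)
Definition on_circle (R : realType) (r x : R) := 0 <= x < r.

Definition dC (R : realType) (r x y : R) : R :=
  Num.min `|x - y| (r - `|x - y|).

Definition antipode (R : realType) (r x : R) : R :=
  if x + r / 2 < r then x + r / 2 else x + r / 2 - r.

Definition circular_coloring (R : realType) (T : finType) (e sigma : rel T)
    (r : R) (f : T -> R) :=
  (forall v, on_circle r (f v)) /\
  (forall u v, e u v ->
     if sigma u v then 1 <= dC r (f u) (antipode r (f v))
     else 1 <= dC r (f u) (f v)).

Definition chi_c (R : realType) (T : finType) (e sigma : rel T) : R :=
  inf [set r : R | 2 <= r /\ exists f : T -> R, circular_coloring e sigma r f].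

(* Nesetril and Rodl's partite construction, which glues copies of a partite
   system along one part at a time over hypergraphs of large girth and
   chromatic number, gives for every N a k-partite system P of large girth with
   this Ramsey property: for every N-colouring of its vertices there are colours
   kap 1, ..., kap k of the parts such that, for all i <> j and both signs, some
   edge of that sign between parts i and j has its ends coloured kap i and kap j.
   Read P as a signed graph; its parts colour it properly.  Cut a circular
   r-colouring, r < 2k, into N arcs of length d = 2k/N and colour each vertex by
   its arc.  The positive edges put the points d kap i and d kap j at circular
   distance at least 1 - 2d, the negative ones put them at distance at most
   r/2 - (1 - 2d); so on the circle of length r/2 obtained by identifying
   antipodes they are k points pairwise 1 - 2d apart, and r >= 2k (1 - 2d).
   Girth is handled through the condition that any 2 to l edges include two
   leaves, which survives the gluing. *)

From HB Require Import structures.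
From mathcomp Require Import all_boot all_order all_algebra.
From mathcomp Require Import reals.
From mathcomp Require Import ring lra zify.
Set Implicit Arguments. Unset Strict Implicit. Unset Printing Implicit Defensive.
Import Order.TTheory GRing.Theory Num.Theory.

(** * Forest-like set families *)

Section Leaves.
Variables (V I : finType) (A : I -> {set V}).

Definition others (F : {set I}) (i : I) : {set V} := \bigcup_(j in F :\ i) A j.

Definition leaf (F : {set I}) (i : I) := (i \in F) && (#|A i :&: others F i| <= 1).

(* The hypergraph form of "girth > l" that is preserved by gluing. *)
Definition forest_upto (l : nat) := forall F : {set I}, 2 <= #|F| <= l ->
  exists i j, [/\ i != j, leaf F i & leaf F j].

Lemma sub_others (F : {set I}) i j : j \in F -> j != i -> A j \subset others F i.
Proof. by move=> jF ji; apply: bigcup_sup; rewrite !inE ji. Qed.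

Lemma leafN (F : {set I}) i j1 j2 x y : x != y -> x \in A i -> y \in A i ->
  j1 \in F -> j2 \in F -> j1 != i -> j2 != i -> x \in A j1 -> y \in A j2 ->
  ~~ leaf F i.
Proof.
move=> xy xi yi j1F j2F j1i j2i xj1 yj2; apply/negP => /andP[_ le1].
suff: #|[set x; y]| <= 1 by rewrite cards2 xy.
apply: leq_trans le1; apply: subset_leq_card; apply/subsetP => z.
rewrite !inE => /orP[]/eqP ->; rewrite ?xi ?yi /=.
  exact: subsetP (sub_others j1F j1i) _ xj1.
exact: subsetP (sub_others j2F j2i) _ yj2.
Qed.

(* Of two leaves, one stays a leaf when an extra point is added to [others]:
   the point lies either in [others F i] already or outside [A j]. *)
Lemma leaf_extend (F : {set I}) i j (T : {set V}) : i != j -> leaf F i -> leaf F j ->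
  #|T| <= 1 -> exists2 x, leaf F x & #|A x :&: (others F x :|: T)| <= 1.
Proof.
move=> ij li lj T1; have [T0|[a Ta]] := set_0Vmem T.
  by exists i; rewrite ?T0 ?setU0 //; case/andP: li.
have {Ta T1}-> : T = [set a] by apply/eqP; rewrite eq_sym eqEcard sub1set Ta cards1.
have [ai|ai] := boolP (a \in others F i).
  by exists i; rewrite // (setUidPl _) ?sub1set //; case/andP: li.
case/andP: lj => jF lj; exists j; first by rewrite /leaf jF.
have aj : a \notin A j by apply: contra ai; apply: subsetP; rewrite sub_others // eq_sym.
suff: A j :&: [set a] = set0 by rewrite setIUr => ->; rewrite setU0.
by apply/setP => x; rewrite !inE; apply: contraNF aj => /andP[xj /eqP <-].
Qed.

Lemma forest_upto_leaf_extend l (F : {set I}) (T : {set V}) :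
  forest_upto l -> 0 < #|F| <= l -> #|T| <= 1 ->
  exists2 x, x \in F & #|A x :&: (others F x :|: T)| <= 1.
Proof.
move=> forestA /andP[F1 Fl] T1; have [F2|F2] := ltnP 1 #|F|.
  have [i [j [ij li lj]]] := forestA F (introT andP (conj F2 Fl)).
  by have [x /andP[xF _] ?] := leaf_extend ij li lj T1; exists x.
have /cards1P[i ->] : #|F| == 1 by rewrite eqn_leq F2.
exists i; rewrite ?set11 // /others setDv big_set0 set0U.
exact: leq_trans (subset_leq_card (subsetIr _ _)) T1.
Qed.

Lemma leaf_small (F : {set I}) i : i \in F -> #|A i| <= 1 -> leaf F i.
Proof.
by move=> iF Ai; rewrite /leaf iF (leq_trans (subset_leq_card (subsetIl _ _))).
Qed.

End Leaves.

Lemma forest_upto_sub (V I : finType) (A B : I -> {set V}) l :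
  (forall i, B i \subset A i) -> forest_upto A l -> forest_upto B l.
Proof.
move=> BA forestA F /forestA[i [j [ij /andP[iF li] /andP[jF lj]]]].
have leafB x : #|A x :&: others A F x| <= 1 -> #|B x :&: others B F x| <= 1.
  apply: leq_trans; apply/subset_leq_card/setISS => //.
  by apply/bigcupsP => y yF; apply: subset_trans (BA y) (bigcup_sup _ yF).
by exists i, j; rewrite /leaf iF jF !leafB.
Qed.

Lemma forest_upto_imset (V W I : finType) (A : I -> {set V}) (h : V -> W) l :
  injective h -> forest_upto A l -> forest_upto (fun i => h @: A i) l.
Proof.
move=> h_inj forestA F /forestA[i [j [ij /andP[iF li] /andP[jF lj]]]].
have othersE x : others (fun i => h @: A i) F x = h @: others A F x.
  apply/setP => w; apply/bigcupP/imsetP => [[y yF /imsetP[v vA ->]]|[v]].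
    by exists v => //; apply/bigcupP; exists y.
  by case/bigcupP=> y yF vA ->; exists y => //; apply: imset_f.
have leafh x : #|A x :&: others A F x| <= 1 ->
    #|h @: A x :&: others (fun i => h @: A i) F x| <= 1.
  by rewrite othersE -imsetI ?card_imset //; move=> ? ? _ _; apply: h_inj.
by exists i, j; rewrite /leaf iF jF !leafh.
Qed.

Lemma card_bigcup_leq (I T : finType) (P : pred I) (A : I -> {set T}) :
  #|\bigcup_(i | P i) A i| <= \sum_(i | P i) #|A i|.
Proof.
elim/big_rec2: _ => [|i n X _ IH]; first by rewrite cards0.
by rewrite (leq_trans (leq_card_setU _ _)) // leq_add2l.
Qed.

(* Members with at most one point are leaves, so only the large ones have to
   be counted against the bound [m]. *)
Lemma forest_upto_two_leaves (V I : finType) (S : I -> {set V}) m (C : {set I}) :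
  forest_upto S m -> 1 < #|C| -> #|[set q in C | 1 < #|S q|]| <= m ->
  exists q1 q2, [/\ q1 != q2, leaf S C q1 & leaf S C q2].
Proof.
rewrite setIdE; set L := [set q | 1 < #|S q|]; set Cb := C :&: L; set Cs := C :\: L.
move=> forestS C2 Cbm.
have small q : q \in Cs -> leaf S C q.
  by rewrite in_setD inE -leqNgt => /andP[Sq qC]; apply: leaf_small.
have cardC : #|Cb| + #|Cs| = #|C| := cardsID L C.
have [Cs2|] := ltnP 1 #|Cs|.
  by have [x [y [xC yC xy]]] := card_gt1P Cs2; exists x, y; split => //; apply: small.
rewrite leq_eqVlt ltnS leqn0 => /orP[/cards1P[p Csp]|/eqP Cs0]; last first.
  have CbC : Cb = C by apply/eqP; rewrite eqEcard subsetIl -cardC Cs0 addn0 leqnn.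
  by apply: forestS; rewrite C2 -CbC.
have pCs : p \in Cs by rewrite Csp set11.
have Sp : #|S p| <= 1 by move: pCs; rewrite in_setD inE -leqNgt => /andP[].
have Cb1 : 0 < #|Cb| <= m by rewrite Cbm andbT; move: C2; rewrite -cardC Csp cards1 addn1.
have [q qCb Sq] := forest_upto_leaf_extend forestS Cb1 Sp.
have /andP[qC qL] : (q \in C) && (q \in L) by rewrite -in_setI.
exists q, p; split; last exact: small.
  by apply: contraTneq qL => ->; move: pCs; rewrite in_setD => /andP[].
apply/andP; split => //; apply: leq_trans Sq; apply/subset_leq_card/setIS.
apply/bigcupsP => y; rewrite !in_setD1 => /andP[yq yC].
have [yL|yL] := boolP (y \in L).
  by apply/subsetU/orP; left; apply: bigcup_sup; rewrite in_setD1 yq in_setI yC yL.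
have : y \in Cs by rewrite in_setD yC yL.
by rewrite Csp inE => /eqP ->; apply: subsetUr.
Qed.

(* At most [l] members meet
   at most [l./2] copies in two or more points of [Z], hence the [l./2]. *)
Section Gluing.
Variables (W Q J : finType) (B : Q * J -> {set W}) (Z : {set W}) (Qs : Q -> {set W}).
Variable l : nat.
Hypothesis forest_copy : forall q, forest_upto (fun e => B (q, e)) l.
Hypothesis card_copyIZ : forall q e, #|B (q, e) :&: Z| <= 1.
Hypothesis copyIZ_sub : forall q e, B (q, e) :&: Z \subset Qs q.
Hypothesis copyI_sub : forall q q' e e', q != q' -> B (q, e) :&: B (q', e') \subset Z.
Hypothesis forest_Qs : forest_upto Qs l./2.

Section Subfamily.
Variable F : {set Q * J}.

Definition fiber q := [set e | (q, e) \in F].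
Definition copies := [set p.1 | p in F].
Definition trace q := \bigcup_(e in fiber q) (B (q, e) :&: Z).

Lemma card_fiber q : #|fiber q| = #|[set p in F | p.1 == q]|.
Proof.
rewrite -(card_imset _ (fun e e' (eqe : (q, e) = (q, e')) => congr1 snd eqe)).
apply: eq_card => -[q' e]; rewrite !inE /=; apply/imsetP/andP.
  by case=> e' eF [-> ->]; rewrite inE in eF.
by case=> qeF /eqP qq'; exists e; rewrite ?inE -?qq'.
Qed.

Lemma card_fiber_le q : #|fiber q| <= #|F|.
Proof. by rewrite card_fiber subset_leq_card // setIdE subsetIl. Qed.

Lemma sum_card_fiber : \sum_q #|fiber q| = #|F|.
Proof.
transitivity (\sum_q \sum_(e | (q, e) \in F) 1).
  by apply: eq_bigr => q _; rewrite -sum1_card; apply: eq_bigl => e; rewrite inE.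
by rewrite pair_big_dep /= sum1_card; apply: eq_card => -[].
Qed.

Lemma others_copy_sub q e : (q, e) \in F ->
  B (q, e) :&: others B F (q, e) \subset
  B (q, e) :&: (others (fun e => B (q, e)) (fiber q) e
                 :|: (trace q :&: others trace copies q)).
Proof.
move=> qeF; apply/subsetP => x; rewrite !inE => /andP[xB /bigcupP[[q' e']]].
rewrite !inE => /andP[ne qeF'] xB'; rewrite xB /=.
have [qq|qq] := eqVneq q' q.
  apply/orP; left; apply/bigcupP; exists e'; last by rewrite -qq.
  by rewrite !inE -qq qeF' andbT; apply: contra ne => /eqP ->; rewrite qq.
have xZ : x \in Z.
  have qq' : q != q' by rewrite eq_sym.
  by apply: subsetP (copyI_sub e e' qq') _ _; rewrite inE xB xB'.
apply/orP; right; apply/andP; split.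
  by apply/bigcupP; exists e; rewrite ?inE ?xB ?xZ.
apply/bigcupP; exists q'.
  by rewrite in_setD1 qq; apply/imsetP; exists (q', e').
by apply/bigcupP; exists e'; rewrite ?inE ?xB' ?xZ.
Qed.

Lemma leaf_of_trace q : #|F| <= l -> q \in copies ->
  #|trace q :&: others trace copies q| <= 1 -> exists e, leaf B F (q, e).
Proof.
move=> Fl qC Sq.
have Fq : 0 < #|fiber q| <= l.
  rewrite (leq_trans (card_fiber_le q) Fl) andbT card_gt0; apply/set0Pn.
  by case/imsetP: qC => -[q' e] qeF ->; exists e; rewrite inE.
have [e eF le1] := forest_upto_leaf_extend (forest_copy q) Fq Sq.
have qeF : (q, e) \in F by rewrite inE in eF.
exists e; rewrite /leaf qeF.
exact: leq_trans (subset_leq_card (others_copy_sub qeF)) le1.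
Qed.

Lemma card_large_traces : #|F| <= l -> #|[set q in copies | 1 < #|trace q|]| <= l./2.
Proof.
move=> Fl; set Cb := [set q in copies | _].
have large q : q \in Cb -> 2 <= #|fiber q|.
  rewrite inE => /andP[_] /leq_trans; apply; apply: leq_trans (card_bigcup_leq _ _) _.
  by rewrite -sum1_card; apply: leq_sum => e _; apply: card_copyIZ.
have sumCb : \sum_(q in Cb) #|fiber q| <= #|F|.
  by rewrite -sum_card_fiber [X in _ <= X](bigID (mem Cb)) leq_addr.
rewrite geq_half_double -muln2 -sum_nat_const.
by apply: leq_trans Fl; apply: leq_trans sumCb; apply: leq_sum.
Qed.

Lemma forest_single_copy : #|copies| <= 1 -> 2 <= #|F| <= l ->
  exists i j, [/\ i != j, leaf B F i & leaf B F j].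
Proof.
move=> C1 /andP[F2 Fl]; have [p pF] : exists p, p \in F.
  by apply/set0Pn; rewrite -card_gt0 ltnW.
set q := p.1; have copiesE : copies = [set q].
  by apply/eqP; rewrite eq_sym eqEcard sub1set cards1 C1 andbT; apply: imset_f.
have Fq : 2 <= #|fiber q| <= l.
  suff -> : #|fiber q| = #|F| by rewrite F2.
  rewrite card_fiber; apply: eq_card => p'; rewrite inE andb_idr // => p'F.
  have : p'.1 \in copies by apply: imset_f.
  by rewrite copiesE inE.
have leafF e : leaf (fun e => B (q, e)) (fiber q) e -> leaf B F (q, e).
  move=> /andP[eF le1]; have qeF : (q, e) \in F by rewrite inE in eF.
  rewrite /leaf qeF; apply: leq_trans (subset_leq_card (others_copy_sub qeF)) _.
  by rewrite /others copiesE setDv big_set0 setI0 setU0.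
have [e1 [e2 [e12 l1 l2]]] := @forest_copy q _ Fq.
exists (q, e1), (q, e2); split; try exact: leafF.
by apply: contra e12 => /eqP[->].
Qed.

End Subfamily.

Lemma trace_sub F q : trace F q \subset Qs q.
Proof. by apply/bigcupsP => e _; apply: copyIZ_sub. Qed.

Lemma forest_upto_glue : forest_upto B l.
Proof.
move=> F /andP[F2 Fl]; have [C2|C1] := ltnP 1 #|copies F|; last first.
  by apply: forest_single_copy; rewrite ?F2.
have forestS := forest_upto_sub (trace_sub F) forest_Qs.
have [q1 [q2 [q12 /andP[q1C l1] /andP[q2C l2]]]] :=
  forest_upto_two_leaves forestS C2 (card_large_traces Fl).
have [e1 le1] := leaf_of_trace Fl q1C l1; have [e2 le2] := leaf_of_trace Fl q2C l2.
by exists (q1, e1), (q2, e2); split => //; apply: contra q12 => /eqP[->].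
Qed.

End Gluing.

(** * The partite construction *)

Record hypergraph (u : nat) := Hypergraph {
  hvertex : finType; hedge : finType; hinc : hedge -> 'I_u -> hvertex }.

Definition hedge_set u (H : hypergraph u) (q : hedge H) := [set hinc q i | i : 'I_u].
Arguments hedge_set {u} H q.

Definition huniform u (H : hypergraph u) := forall q, injective (@hinc u H q).

Definition hchromatic_gt u (H : hypergraph u) c := forall col : hvertex H -> 'I_c,
  exists q k, forall i, col (hinc q i) = k.

(* Partite systems over the template [tpl]: an edge of type [j] has its
   [p]-th vertex in the part [tpl j p]. *)
Section PartiteSystems.
Variables (a u : nat) (TE : finType) (tpl : TE -> 'I_u -> 'I_a).
Hypothesis tpl_inj : forall j, injective (tpl j).

Record psystem := PSystem {
  pvertex : finType; pedge : finType;
  part : pvertex -> 'I_a;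
  pinc : pedge -> 'I_u -> pvertex;
  ptype : pedge -> TE;
  part_pinc : forall e p, part (pinc e p) = tpl (ptype e) p }.

Definition pedge_set (P : psystem) (e : pedge P) := [set pinc e p | p : 'I_u].
Arguments pedge_set : clear implicits.

Lemma pinc_inj (P : psystem) (e : pedge P) : injective (pinc e).
Proof. by move=> p p' /(congr1 (@part P)); rewrite !part_pinc => /tpl_inj. Qed.

(* The Ramsey property of the construction, obtained one part at a time: only
   the vertices in the parts below [t] are constrained. *)
Definition ramsey_below (P : psystem) (t c : nat) := forall col : pvertex P -> 'I_c,
  exists kap : 'I_a -> 'I_c, forall j : TE, exists e, ptype e = j /\
    forall p, tpl j p < t -> col (pinc e p) = kap (tpl j p).

(* One copy of [P] for each edge [q] of [Q], the vertices of part [t] in copy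
   [q] being identified with those of [q] (through an enumeration of part [t]).
   The vertices [inr (q, v)] with [v] in part [t] are unused. *)
Section Amalgam.
Variables (P : psystem) (t : 'I_a).
Definition part_vertex := {v : pvertex P | part v == t}.
Variable Q : hypergraph #|{: part_vertex}|.

Definition avertex := (hvertex Q + (hedge Q * pvertex P))%type.

Definition copy (q : hedge Q) (v : pvertex P) : avertex :=
  if insub v is Some x then inl (hinc q (enum_rank x)) else inr (q, v).

Variant copy_spec q v : avertex -> Type :=
  | CopyPart (x : part_vertex) of val x = v : copy_spec q v (inl (hinc q (enum_rank x)))
  | CopyOut of part v != t : copy_spec q v (inr (q, v)).

Lemma copyP q v : copy_spec q v (copy q v).
Proof. by rewrite /copy; case: insubP => [x _ <-|/negP/negP]; constructor. Qed.

Definition apart (x : avertex) : 'I_a := if x is inr (_, v) then part v else t.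

Lemma apart_copy q v : apart (copy q v) = part v.
Proof. by case: copyP => // x <-; rewrite (eqP (valP x)). Qed.

Definition ainc (e : hedge Q * pedge P) p := copy e.1 (pinc e.2 p).

Lemma apart_ainc e p : apart (ainc e p) = tpl (ptype e.2) p.
Proof. by rewrite apart_copy part_pinc. Qed.

Definition amalgam := PSystem apart_ainc.

Lemma copy_inj q : huniform Q -> injective (copy q).
Proof.
move=> Qu v1 v2; case: copyP => [x1 <-|_]; case: copyP => [x2 <-|_] //; last by case.
by case=> /Qu /enum_rank_inj ->.
Qed.

Lemma ramsey_below_amalgam c : hchromatic_gt Q c ->
  ramsey_below P t c -> ramsey_below amalgam t.+1 c.
Proof.
move=> Qchi ramseyP col.
have [q [k0 qmono]] := Qchi (fun x => col (inl x)).
have [kap kapP] := ramseyP (fun v => col (copy q v)).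
exists (fun i => if i == t then k0 else kap i) => j.
have [e [ej ekap]] := kapP j; exists (q, e); split => // p.
rewrite ltnS leq_eqVlt => /orP[/eqP/val_inj jt|jlt]; rewrite /= /ainc /=.
  rewrite jt eqxx; case: copyP => [x _|]; first exact: qmono.
  by rewrite part_pinc ej jt eqxx.
by rewrite ekap // ifN // neq_ltn jlt.
Qed.

Lemma forest_upto_amalgam l : forest_upto (pedge_set P) l -> huniform Q ->
  forest_upto (hedge_set Q) l./2 -> forest_upto (pedge_set amalgam) l.
Proof.
move=> forestP Qu forestQ.
pose Z := [set inl y | y : hvertex Q] : {set avertex}.
have edgeE q e : pedge_set amalgam (q, e) = copy q @: pedge_set P e.
  by rewrite -imset_comp.
have copyZ q v : copy q v \in Z -> part v = t.
  by case: copyP => [x <- _|_ /imsetP[]//]; rewrite (eqP (valP x)).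
apply: (@forest_upto_glue _ _ _ _ Z (fun q => inl @: hedge_set Q q) l).
- move=> q; apply: forest_upto_sub (forest_upto_imset (@copy_inj q Qu) forestP) => e.
  by rewrite edgeE.
- move=> q e; rewrite edgeE; apply/card_le1_eqP => x y.
  case/setIP=> /imsetP[v1 /imsetP[p1 _ ->] ->] /copyZ; rewrite part_pinc => p1t.
  case/setIP=> /imsetP[v2 /imsetP[p2 _ ->] ->] /copyZ; rewrite part_pinc => p2t.
  by rewrite (tpl_inj (etrans p1t (esym p2t))).
- move=> q e; apply/subsetP => x; rewrite edgeE.
  case/setIP=> /imsetP[v _ ->]; case: copyP => [w _ _|_ /imsetP[]//].
  by rewrite !imset_f.
- move=> q q' e e' qq'; apply/subsetP => x; rewrite !edgeE.
  case/setIP=> /imsetP[v _ ->] /imsetP[v' _].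
  case: copyP => [w _ _|_]; first exact: imset_f.
  by case: copyP => // _ [qq]; rewrite qq eqxx in qq'.
- by apply: forest_upto_imset forestQ => ? ? [].
Qed.

End Amalgam.

Definition disjoint_system :=
  @PSystem (TE * 'I_u)%type TE (fun x => tpl x.1 x.2) pair id (fun _ _ => erefl).

Lemma forest_upto_disjoint_system l : forest_upto (pedge_set disjoint_system) l.
Proof.
move=> F /andP[F2 _]; have [i [j [iF jF ij]]] := card_gt1P F2.
have leafF x : x \in F -> leaf (pedge_set disjoint_system) F x.
  move=> xF; rewrite /leaf xF (_ : _ :&: _ = set0) ?cards0 //.
  apply/setP => y; rewrite !inE; apply/negbTE/andP.
  case=> /imsetP[p _ ->] /bigcupP[z]; rewrite in_setD1 => /andP[zx _].
  by case/imsetP=> p' _ [xz _]; rewrite xz eqxx in zx.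
by exists i, j; split => //; apply: leafF.
Qed.

Lemma ramsey_below_disjoint_system c : 0 < c -> ramsey_below disjoint_system 0 c.
Proof. by move=> c0 col; exists (fun _ => Ordinal c0) => j; exists j. Qed.

Lemma partite_construction c l : 0 < c ->
  (forall w, exists Q : hypergraph w,
     [/\ huniform Q, hchromatic_gt Q c & forest_upto (hedge_set Q) l./2]) ->
  exists P : psystem, forest_upto (pedge_set P) l /\ ramsey_below P a c.
Proof.
move=> c0 hypergraphs.
suff: forall t, t <= a ->
    exists P : psystem, forest_upto (pedge_set P) l /\ ramsey_below P t c.
  by apply.
elim=> [_|t IH ta].
  exists disjoint_system.
  by split; [apply: forest_upto_disjoint_system|apply: ramsey_below_disjoint_system].
have [P [forestP ramseyP]] := IH (ltnW ta).
have [Q [Qu Qchi forestQ]] := hypergraphs #|{: part_vertex P (Ordinal ta)}|.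
exists (amalgam Q); split; first exact: forest_upto_amalgam.
exact: (ramsey_below_amalgam Qchi).
Qed.

End PartiteSystems.

Arguments pedge_set {a u TE tpl} P e.

Definition injection w n := {f : {ffun 'I_w -> 'I_n} | injectiveb f}.

Definition injection_fun w n (f : injection w n) (i : 'I_w) : 'I_n := val f i.

Lemma injection_fun_inj w n (f : injection w n) : injective (injection_fun f).
Proof. exact/injectiveP/(valP f). Qed.

Definition complete_hypergraph w n : hypergraph w :=
  @Hypergraph w 'I_n (injection w n) (@injection_fun w n).

Lemma monochromatic_injection w c (kap : 'I_(w * c) -> 'I_c) : 0 < c ->
  exists f : injection w (w * c), exists k, forall i, kap (injection_fun f i) = k.
Proof.
move=> c0; pose S k := [set x | kap x == k].
have [k wSk] : exists k, w <= #|S k|.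
  have [w0|w0] := posnP w; first by exists (Ordinal c0); rewrite {1}w0.
  apply/existsP; apply/contraT; rewrite negb_exists => /forallP small.
  have : \sum_(k < c) #|S k| <= \sum_(k < c) (w - 1).
    by apply: leq_sum => k _; move: (small k); rewrite -ltnNge; lia.
  suff -> : \sum_(k < c) #|S k| = w * c by rewrite sum_nat_const card_ord; nia.
  rewrite -[RHS]card_ord -sum1_card (partition_big kap predT) //=.
  by apply: eq_bigr => k _; rewrite -sum1_card; apply: eq_bigl => x; rewrite inE.
pose f := [ffun i => enum_val (widen_ord wSk i)].
have finj : injectiveb f.
  by apply/injectiveP => i j; rewrite !ffunE => /enum_val_inj[/val_inj].
exists (exist _ f finj), k => i; rewrite /injection_fun /= ffunE.
by have := enum_valP (widen_ord wSk i); rewrite inE => /eqP.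
Qed.

Lemma complete_hypergraph_chromatic w c : 0 < c ->
  hchromatic_gt (complete_hypergraph w (w * c)) c.
Proof.
by move=> c0 col; have [f [k fk]] := monochromatic_injection col c0; exists f, k.
Qed.

(* Induction on [l]: the partite construction over the template of all
   injections ['I_w -> 'I_(w * c)], one of which any [kap] makes monochromatic,
   only needs hypergraphs of girth [l./2]. *)
Lemma hypergraph_girth_chromatic c l w : 0 < c ->
  exists Q : hypergraph w,
    [/\ huniform Q, hchromatic_gt Q c & forest_upto (hedge_set Q) l].
Proof.
move=> c0; elim/ltn_ind: l w => l IH w; have [l1|l2] := leqP l 1.
  exists (complete_hypergraph w (w * c)); split.
  - exact: injection_fun_inj.
  - exact: complete_hypergraph_chromatic.
  - by move=> F /andP[F2 Fl]; have := leq_trans F2 (leq_trans Fl l1).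
have half_lt : l./2 < l by rewrite -divn2 ltn_Pdiv // ltnW.
have [P [forestP ramseyP]] :=
  partite_construction (@injection_fun_inj w (w * c)) c0 (IH _ half_lt).
exists (Hypergraph (@pinc _ _ _ _ P)); split => //.
- exact: pinc_inj (@injection_fun_inj w (w * c)) _.
- move=> col; have [kap kapP] := ramseyP col.
  have [f [k fk]] := monochromatic_injection kap c0.
  have [e [ef ekap]] := kapP f.
  by exists e, k => i; rewrite /= ekap // fk.
Qed.

(** * The signed graph of a partite system *)

Lemma forest_upto_inj (V I : finType) (A : I -> {set V}) l E1 E2 :
  forest_upto A l -> 1 < l -> 1 < #|A E1| -> A E1 = A E2 -> E1 = E2.
Proof.
move=> forestA l2 AE1 AE12; apply/eqP/negPn/negP => E12.
have F2 : 2 <= #|[set E1; E2]| <= l by rewrite cards2 E12.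
have [i [j [_ /andP[iF li] _]]] := forestA _ F2.
suff: #|A i :&: others A [set E1; E2] i| > 1 by rewrite ltnNge li.
case/set2P: iF => ->.
  by rewrite (setIidPl _) // AE12 sub_others ?set22 // eq_sym.
by rewrite (setIidPl _) -AE12 // sub_others ?set21.
Qed.

Lemma next_next_neq (T : eqType) (s : seq T) y : uniq s -> 2 < size s -> y \in s ->
  next s (next s y) != y.
Proof.
move=> us s3 ys; case: (rot_to ys) => i s' rot_s.
have us' : uniq (y :: s') by rewrite -rot_s rot_uniq.
have s3' : 2 < size (y :: s') by rewrite -rot_s size_rot.
rewrite -!(next_rot i us) rot_s.
case: s' {rot_s} us' s3' => [|z [|w r]] //= /andP[].
rewrite !inE negb_or => /andP[yz /norP[yw _]] _ _.
by rewrite eqxx [z == y]eq_sym (negbTE yz) eqxx eq_sym.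
Qed.

Section CycleEdges.
Variables (T : finType) (e : rel T) (s : seq T).
Hypotheses (e_irr : irreflexive e) (s_cycle : is_cycle e s).

Definition cycle_edge x := [set x; next s x].

Lemma next_neq x : x \in s -> next s x != x.
Proof.
move=> xs; have /andP[_ cs] := s_cycle.
by apply: contraTneq (next_cycle cs xs) => ->; rewrite e_irr.
Qed.

Lemma cycle_edge_inj : {in s &, injective cycle_edge}.
Proof.
have /andP[/andP[s3 us] _] := s_cycle.
move=> x y xs ys exy; apply/eqP/negPn/negP => xy.
have /set2P[yx|ynx] : y \in cycle_edge x by rewrite exy set21.
  by rewrite yx eqxx in xy.
have /set2P[xy'|xny] : x \in cycle_edge y by rewrite -exy set21.
  by rewrite xy' eqxx in xy.
by move: (next_next_neq us s3 xs); rewrite -ynx -xny eqxx.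
Qed.

Variables (I : finType) (A : I -> {set T}) (l : nat).
Hypotheses (forestA : forest_upto A l) (l2 : 1 < l).

Definition cycle_members := [set E | [exists x, (x \in s) && (A E == cycle_edge x)]].

Lemma card_cycle_members : #|cycle_members| <= size s.
Proof.
have /andP[/andP[_ us] _] := s_cycle.
have: cycle_members \subset \bigcup_(x in s) [set E | A E == cycle_edge x].
  apply/subsetP => E; rewrite inE => /existsP[x /andP[xs AE]].
  by apply/bigcupP; exists x; rewrite ?inE.
move/subset_leq_card/leq_trans; apply; apply: leq_trans (card_bigcup_leq _ _) _.
rewrite -(card_uniqP us) -sum1_card; apply: leq_sum => x xs.
apply/card_le1_eqP => E1 E2; rewrite !inE => /eqP AE1 /eqP AE2.
by apply: forest_upto_inj forestA l2 _ _; rewrite ?AE1 ?AE2 // cards2 eq_sym next_neq.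
Qed.

End CycleEdges.

Lemma girth_ge_forest_upto (T I : finType) (e : rel T) (A : I -> {set T}) l :
  forest_upto A l -> 1 < l -> irreflexive e ->
  (forall x y, e x y -> exists E, A E = [set x; y]) -> girth_ge e l.+1.
Proof.
move=> forestA l2 e_irr edgeA s s_cycle; rewrite ltnNge; apply/negP => sl.
have /andP[/andP[s3 us] cs] := s_cycle.
have nxx := next_neq e_irr s_cycle; have cycle_edge_inj := cycle_edge_inj s_cycle.
set F := cycle_members s A.
have edgeF x : x \in s -> exists2 E, E \in F & A E = cycle_edge s x.
  move=> xs; have [E AE] := edgeA _ _ (next_cycle cs xs).
  by exists E => //; rewrite inE; apply/existsP; exists x; rewrite xs AE eqxx.
have [x0 x0s] : exists x0, x0 \in s.
  by case: (s) s3 => [|y ?] //; exists y; rewrite inE eqxx.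
have F2 : 2 <= #|F| <= l.
  rewrite (leq_trans (card_cycle_members e_irr s_cycle forestA l2) sl) andbT.
  have x1s : next s x0 \in s by rewrite mem_next.
  have [E1 E1F AE1] := edgeF _ x0s; have [E2 E2F AE2] := edgeF _ x1s.
  apply/card_gt1P; exists E1, E2; split => //; apply: contra_neq (nxx _ x0s) => E12.
  by apply: cycle_edge_inj; rewrite // -AE1 -AE2 E12.
have [i [_ [_ li _]]] := forestA _ F2.
have /andP[iF _] := li; move: iF; rewrite inE => /existsP[x /andP[xs /eqP Ai]].
have pxs : prev s x \in s by rewrite mem_prev.
have nxs : next s x \in s by rewrite mem_next.
have [E' E'F AE'] := edgeF _ pxs; have [E'' E''F AE''] := edgeF _ nxs.
suff : ~~ leaf A F i by rewrite li.
apply: (leafN (x := x) (y := next s x) _ _ _ E'F E''F).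
- by rewrite eq_sym nxx.
- by rewrite Ai set21.
- by rewrite Ai set22.
- apply: contraTneq (nxx _ pxs) => E'i; rewrite next_prev // negbK.
  by apply/eqP/cycle_edge_inj; rewrite // -Ai -E'i AE'.
- apply: contraTneq (nxx _ xs) => E''i; rewrite negbK.
  by apply/eqP/cycle_edge_inj; rewrite // -Ai -E''i AE''.
- by rewrite AE' /cycle_edge next_prev // set22.
- by rewrite AE'' set21.
Qed.

Section SignedGraph.
Variable k : nat.

(* Edge types [(i, j, b)]: an edge between parts [i] and [j], negative iff [b]. *)
Definition signed_pair := {x : 'I_k * 'I_k * bool | x.1.1 != x.1.2}.

Definition signed_pair_part (x : signed_pair) (p : 'I_2) : 'I_k :=
  if p == ord0 then (val x).1.1 else (val x).1.2.

Lemma signed_pair_part_inj x : injective (signed_pair_part x).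
Proof.
have := valP x; rewrite /signed_pair_part.
move=> ij [[|[|p]] hp] [[|[|q]] hq] //= eq_pq; try exact: val_inj.
all: by rewrite eq_pq eqxx in ij.
Qed.

Variable P : psystem signed_pair_part.

Definition sgraph : rel (pvertex P) := fun x y => [exists E, pedge_set P E == [set x; y]].

Definition negative (E : pedge P) := (val (ptype E)).2.

Definition ssign : rel (pvertex P) :=
  fun x y => [exists E, negative E && (pedge_set P E == [set x; y])].

Lemma pedge_set2 (E : pedge P) : pedge_set P E = [set pinc E ord0; pinc E ord_max].
Proof.
apply/setP => x; apply/imsetP/set2P => [[[[|[|p]] hp] _ ->]|[]->] //.
- by left; congr pinc; apply: val_inj.
- by right; congr pinc; apply: val_inj.
- by exists ord0.
- by exists ord_max.
Qed.

Lemma sgraph_sym : symmetric sgraph.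
Proof. by move=> x y; apply/existsP/existsP => -[E]; exists E; rewrite setUC. Qed.

Lemma ssign_sym : symmetric ssign.
Proof. by move=> x y; apply/existsP/existsP => -[E]; exists E; rewrite setUC. Qed.

Lemma card_pedge_set (E : pedge P) : #|pedge_set P E| = 2.
Proof. by rewrite card_imset ?card_ord //; apply: (pinc_inj signed_pair_part_inj). Qed.

Lemma sgraph_irr : irreflexive sgraph.
Proof.
move=> x; apply/existsP => -[E /eqP EE].
by have := card_pedge_set E; rewrite EE setUid cards1.
Qed.

Lemma sgraph_pedge_set x y : sgraph x y -> exists E, pedge_set P E = [set x; y].
Proof. by case/existsP=> E /eqP; exists E. Qed.

Lemma sgraph_pinc (E : pedge P) : sgraph (pinc E ord0) (pinc E ord_max).
Proof. by apply/existsP; exists E; rewrite pedge_set2. Qed.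

Lemma sgraph_part x y : sgraph x y -> part x != part y.
Proof.
case/existsP=> E /eqP EE; have : x != y.
  by apply/eqP => xy; have := card_pedge_set E; rewrite EE xy setUid cards1.
have /imsetP[p _ ->] : x \in pedge_set P E by rewrite EE set21.
have /imsetP[p' _ ->] : y \in pedge_set P E by rewrite EE set22.
by rewrite !part_pinc; apply: contra => /eqP/signed_pair_part_inj ->.
Qed.

Lemma colorable_sgraph : colorable sgraph k.
Proof. by exists (fun v => part v) => x y /sgraph_part. Qed.

Lemma girth_ge_sgraph l : forest_upto (pedge_set P) l -> 1 < l ->
  girth_ge sgraph l.+1.
Proof.
by move=> forestP l2; apply: girth_ge_forest_upto forestP l2 sgraph_irr sgraph_pedge_set.
Qed.

Lemma ssign_pinc l (E : pedge P) : forest_upto (pedge_set P) l -> 1 < l ->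
  ssign (pinc E ord0) (pinc E ord_max) = negative E.
Proof.
move=> forestP l2; apply/existsP/idP => [[E' /andP[nE' /eqP E'E]]|nE].
  have E'E2 : pedge_set P E' = pedge_set P E by rewrite E'E pedge_set2.
  by rewrite -(forest_upto_inj forestP l2 _ E'E2) ?card_pedge_set.
by exists E; rewrite nE pedge_set2 eqxx.
Qed.

End SignedGraph.

Arguments sgraph {k} P x y.
Arguments ssign {k} P x y.

(** * Circular colourings *)

Local Open Scope ring_scope.

Ltac split_norms := repeat match goal with |- context[ `|?t| ] =>
  let h := fresh "h" in
  have [h|h] := lerP 0 t; [rewrite ?(ger0_norm h)|rewrite ?(ltr0_norm h)] end.

Section CircleGeometry.
Variable R : realType.
Implicit Types r d del x y za zb rho : R.

Lemma dC_approx r x y za zb del :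
  0 <= za <= x -> x < za + del -> 0 <= zb <= y -> y < zb + del ->
  1 <= dC r x y -> 1 - 2 * del <= dC r za zb.
Proof.
rewrite /dC !le_min => /andP[? ?] ? /andP[? ?] ?.
by move=> /andP[]; split_norms => *; apply/andP; split; lra.
Qed.

Lemma dC_antipode_approx r x y za zb del :
  0 <= za <= x -> x < za + del -> 0 <= zb <= y -> y < zb + del -> x < r -> y < r ->
  1 <= dC r x (antipode r y) -> dC r za zb <= r / 2 - (1 - 2 * del).
Proof.
rewrite /dC /antipode le_min ge_min => /andP[? ?] ? /andP[? ?] ? ? ?.
by case: ifP => _ /andP[]; split_norms => *; apply/orP; first [left; lra | right; lra].
Qed.

Definition half_wrap r z := if z < r / 2 then z else z - r / 2.

Lemma dC_half_wrap r za zb d : 0 <= za < r -> 0 <= zb < r ->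
  d <= dC r za zb <= r / 2 - d -> d <= dC (r / 2) (half_wrap r za) (half_wrap r zb).
Proof.
rewrite /dC /half_wrap !le_min ge_min.
case: (ltP za (r / 2)) => ?; case: (ltP zb (r / 2)) => ?; split_norms.
all: by move=> /andP[? ?] /andP[? ?] /andP[/andP[? ?] /orP[?|?]]; apply/andP; split; lra.
Qed.

Section Packing.
Variables (I : finType) (w : I -> R) (d rho : R).
Hypothesis dC_w : forall i j, i != j -> d <= dC rho (w i) (w j).

Lemma spread_points n (S : {set I}) : #|S| = n.+1 ->
  exists i j, [/\ i \in S, j \in S & n%:R * d <= w j - w i].
Proof.
elim: n S => [|n IH] S cardS.
all: have /set0Pn[i0 Si0] : S != set0 by rewrite -card_gt0 cardS.
  by exists i0, i0; rewrite Si0 subrr mul0r.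
case: (arg_maxP w Si0) => M SM' Mmax; have SM : M \in S := SM'.
have cardSM : #|S :\ M| = n.+1 by move: cardS; rewrite (cardsD1 M) SM => -[].
have [i [j [/setD1P[_ Si] /setD1P[jM Sj] spread_ij]]] := IH _ cardSM.
exists i, M; split => //; have wjM : w j <= w M := Mmax _ Sj.
move: (dC_w jM); rewrite /dC le_min => /andP[+ _]; split_norms => *.
all: rewrite -natr1 mulrDl mul1r; lra.
Qed.

Lemma circle_packing : 0 < d -> (1 < #|I|)%N -> #|I|%:R * d <= rho.
Proof.
move=> d0 I2; have cardT : #|[set: I]| = #|I|.-1.+1 by rewrite cardsT prednK // ltnW.
have [i [j [_ _ ij]]] := spread_points cardT.
have kd0 : 0 < #|I|.-1%:R * d by rewrite mulr_gt0 // ltr0n -ltnS prednK // ltnW.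
have neq_ij : i != j by apply: contraTneq ij => ->; rewrite subrr -ltNge.
move: (dC_w neq_ij); rewrite /dC le_min => /andP[_ +].
rewrite -[#|I|]prednK ?(ltnW I2) // -natr1 mulrDl mul1r.
by split_norms => *; lra.
Qed.

End Packing.

Lemma bin_index (T : Type) (f : T -> R) del N : 0 < del ->
  (forall v, 0 <= f v < del * N.+1%:R) ->
  exists col : T -> 'I_N.+1, forall v, del * (col v)%:R <= f v < del * (col v)%:R + del.
Proof.
move=> del0 f_range; exists (fun v => inord (Num.truncn (f v / del))) => v.
have /andP[fv0 fvN] := f_range v; have fdel0 : 0 <= f v / del by rewrite divr_ge0 // ltW.
rewrite inordK; last by rewrite truncn_lt_nat // ltr_pdivrMr // mulrC.
have /andP[lo] := truncn_itv fdel0; rewrite -natr1 => hi.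
set x := f v / del in lo hi *; have -> : f v = del * x by rewrite mulrC divfK ?gt_eqF.
by rewrite ler_pM2l // lo /= -[X in _ < _ + X]mulr1 -mulrDr ltr_pM2l.
Qed.

End CircleGeometry.

Section CircularColorings.
Variables (R : realType) (T : finType) (e sigma : rel T).

(* Colour [i] goes to the point [i] of the circle of length [2 n]: all colours
   lie in a half-circle, so antipodes are at distance >= 1 from every colour. *)
Lemma circular_coloring_of_colorable n : colorable e n ->
  exists f : T -> R, circular_coloring e sigma (2 * n)%:R f.
Proof.
move=> [col col_proper]; exists (fun v => (col v : nat)%:R).
have col_lt v : (col v : nat)%:R + 1 <= n%:R :> R by rewrite natr1 ler_nat.
split=> [v|u v uv].
  by rewrite /on_circle ler0n /= natrM; have := col_lt v; have := ler0n R (col v); lra.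
have := col_lt u; have := col_lt v; have := ler0n R (col u); have := ler0n R (col v).
rewrite /dC natrM; case: (sigma u v).
  rewrite /antipode le_min; case: ifP => [_|/negbT]; last by rewrite -leNgt => *; lra.
  by split_norms => *; apply/andP; split; lra.
have : (col u : nat) != col v by apply: contraNneq (col_proper _ _ uv) => /val_inj ->.
rewrite neq_ltn => /orP[]; rewrite -(ler_nat R) -natr1 le_min.
all: by split_norms => *; apply/andP; split; lra.
Qed.

Lemma chi_c_ge n b : (0 < n)%N -> colorable e n ->
  (forall r f, circular_coloring e sigma r f -> b <= r) -> b <= chi_c R e sigma.
Proof.
move=> n0 coln lb; apply: lb_le_inf => [|r [_ [f cf]]]; last exact: lb cf.
have [f cf] := circular_coloring_of_colorable coln.
by exists (2 * n)%:R; split; [rewrite ler_nat; lia | exists f].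
Qed.

Lemma chromatic_number_eq_of_circular k : colorable e k ->
  (forall (r : R) f, circular_coloring e sigma r f -> (2 * k)%:R - 2 < r) ->
  chromatic_number_eq e k.
Proof.
move=> colk lb; split => // n /circular_coloring_of_colorable[f /lb].
by rewrite !natrM -ltnS -(ltr_nat R) -natr1 => *; lra.
Qed.

End CircularColorings.

Section CircularBound.
Variables (R : realType) (k N l : nat) (P : psystem (@signed_pair_part k)).
Hypotheses (k2 : (1 < k)%N) (l2 : (1 < l)%N).
Hypothesis forestP : forest_upto (pedge_set P) l.

(* The positive edge of type [(i, j)] keeps [del * kap i] and [del * kap j] at
   least [1 - 2 del] apart, the negative one at most [r / 2 - (1 - 2 del)]. *)
Lemma sgraph_part_spacing (r del : R) f (col : pvertex P -> 'I_N.+1) kap :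
  circular_coloring (sgraph P) (ssign P) r f -> 0 <= del ->
  (forall v, del * (col v)%:R <= f v < del * (col v)%:R + del) ->
  (forall j, exists E, ptype E = j /\
     forall p, col (pinc E p) = kap (signed_pair_part j p)) ->
  forall i j, i != j -> 1 - 2 * del <=
    dC (r / 2) (half_wrap r (del * (kap i)%:R)) (half_wrap r (del * (kap j)%:R)).
Proof.
move=> [onc cc] del0 bins edges i j ij.
have near v z : col v = z -> 0 <= del * z%:R <= f v /\ f v < del * z%:R + del.
  by move=> <-; have /andP[lo hi] := bins v; rewrite lo mulr_ge0.
have [Ep [Ept Epc]] := edges (exist _ (i, j, false) ij).
have [En [Ent Enc]] := edges (exist _ (i, j, true) ij).
have [ip1 ip2] := near _ _ (Epc ord0); have [jp1 jp2] := near _ _ (Epc ord_max).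
have [in1 in2] := near _ _ (Enc ord0); have [jn1 jn2] := near _ _ (Enc ord_max).
have := cc _ _ (sgraph_pinc Ep); rewrite (ssign_pinc _ forestP l2) /negative Ept /= => cp.
have := cc _ _ (sgraph_pinc En); rewrite (ssign_pinc _ forestP l2) /negative Ent /= => cn.
have onc_z v (z : 'I_N.+1) : 0 <= del * z%:R <= f v -> 0 <= del * z%:R < r.
  move=> /andP[-> zf] /=; apply: le_lt_trans zf _.
  by have /andP[] := onc v.
apply: dC_half_wrap; [exact: onc_z ip1|exact: onc_z jp1|apply/andP; split].
  exact: dC_approx ip1 ip2 jp1 jp2 cp.
apply: dC_antipode_approx in1 in2 jn1 jn2 _ _ cn.
  by have /andP[] := onc (pinc En ord0).
by have /andP[] := onc (pinc En ord_max).
Qed.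

Hypothesis ramseyP : ramsey_below P k N.+1.

Lemma sgraph_circular_bound (r : R) f : circular_coloring (sgraph P) (ssign P) r f ->
  (2 * k)%:R - 8 * k%:R ^+ 2 / N.+1%:R <= r.
Proof.
move=> cf; set del : R := (2 * k)%:R / N.+1%:R.
have k0 : 0 <= k%:R :> R by [].
have del0 : 0 < del by rewrite divr_gt0 // ltr0n muln_gt0 /= (ltn_trans _ k2).
have -> : (2 * k)%:R - 8 * k%:R ^+ 2 / N.+1%:R = 2 * k%:R * (1 - 2 * del) :> R.
  by rewrite /del natrM; field; rewrite addrC natr1 pnatr_eq0.
have [r2k|r2k] := lerP (2 * k)%:R r.
  by apply: le_trans r2k; rewrite natrM; nra.
have [col bins] : exists col : pvertex P -> 'I_N.+1,
    forall v, del * (col v)%:R <= f v < del * (col v)%:R + del.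
  apply: bin_index del0 _ => v; rewrite /del divfK ?pnatr_eq0 //.
  by case: cf => /(_ v) /andP[-> fvr] _ /=; apply: lt_trans fvr r2k.
have [kap kapP] := ramseyP col.
have edges (j : signed_pair k) : exists E, ptype E = j /\
    forall p, col (pinc E p) = kap (signed_pair_part j p).
  by have [E [Ej EP]] := kapP j; exists E; split => // p; apply: EP.
have spacing := sgraph_part_spacing cf (ltW del0) bins edges.
have [d0|d0] := ltrP 0 (1 - 2 * del).
  by have := circle_packing spacing d0; rewrite card_ord => /(_ k2); nra.
(* Otherwise the bound is <= 0, and any vertex shows that [0 <= r]. *)
have [E _] := edges (exist _ (Ordinal (ltnW k2), Ordinal k2, false) isT).
by case: cf => /(_ (pinc E ord0)) /andP[fv0 fvr] _; nra.
Qed.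

End CircularBound.

Theorem theorem2 (R : realType) (k g : nat) (eps : R) :
  (2 <= k)%N -> (3 <= g)%N -> 0 < eps ->
  exists (T : finType) (e sigma : rel T),
    simple_graph e /\ symmetric sigma /\
    girth_ge e g /\ chromatic_number_eq e k /\
    (2 * k)%:R - eps < chi_c R e sigma.
Proof.
move=> k2 g3 eps0.
have [N] : exists N : nat, 8 * k%:R ^+ 2 / N.+1%:R < Num.min eps 1.
  have min_gt0 : 0 < Num.min eps 1 by rewrite lt_min eps0 ltr01.
  exists (Num.truncn (8 * k%:R ^+ 2 / Num.min eps 1)).
  by rewrite ltr_pdivrMr // -ltr_pdivrMl // mulrC truncnS_gt.
rewrite lt_min => /andP[N_eps N_1].
have g1 : (1 < g.-1)%N by case: g g3 => [|[|[|g]]].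
have [P [forestP ramseyP]] := partite_construction (@signed_pair_part_inj k) (ltn0Sn N)
  (fun w => hypergraph_girth_chromatic (g.-1)./2 w (ltn0Sn N)).
have bound (r : R) f : circular_coloring (sgraph P) (ssign P) r f ->
    (2 * k)%:R - 8 * k%:R ^+ 2 / N.+1%:R <= r.
  exact: (sgraph_circular_bound (R := R) k2 g1 forestP ramseyP).
exists (pvertex P), (sgraph P), (ssign P); split; [|split; [|split; [|split]]].
- exact: conj (@sgraph_sym _ P) (@sgraph_irr _ P).
- exact: ssign_sym.
- by rewrite -(prednK (ltnW (ltnW g3))); apply: girth_ge_sgraph forestP g1.
- apply: chromatic_number_eq_of_circular (colorable_sgraph P) _ => r f /bound h.
  by apply: lt_le_trans h; rewrite ltrD2l ltrN2 (lt_trans N_1) // ltr1n.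
- apply: lt_le_trans (chi_c_ge (ltnW k2) (colorable_sgraph P) bound).
  by rewrite ltrD2l ltrN2.
Qed.
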